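(* In the setting of the context, with $\alpha_k=\frac a{b+k}$, $a>0$, $b>1$, $\frac ab\le\frac1{2M\tilde L}$, put $t=2a\sigma_\ell^2$ and for $n\ge1$ let $T_n=\sum_{i=1}^nA_i^{(n)}C(\alpha_{i-1})$. If $t<1$ there is a constant $K$ independent of $n$ with $T_n\le K(b+n)^{-t}$ for all $n\ge1$; if $t>1$ there is a constant $K$ independent of $n$ with $T_n\le K(b+n)^{-1}$ for all $n\ge1$.
   Context: Standing setting: $M\ge N$, $A\in\mathbb{R}^{M\times N}$ of full column rank with rows $a_1,\dots,a_M$, right-hand side $(b_1,\dots,b_M)$, $F(x)=\frac12\|Ax-(b_1,\dots,b_M)^\top\|^2$, $F_*=\min F$; singular values $\sigma_1\ge\dots\ge\sigma_N>0$, $\tilde L=\max_i\|a_i\|^2$. Fix $\ell$. $C(\alpha)=2\alpha^2M\tilde LF_*$; for fixed $n$ and $0\le k\le n$, $A_k^{(n)}=\prod_{i=k}^n(1-2\alpha_i\sigma_\ell^2)$. (Step-size scalars $a,b$ are unrelated to $a_i,b_i$.) *)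

From HB Require Import structures.
From mathcomp Require Import all_boot all_order all_algebra.
From mathcomp Require Import all_classical all_reals all_analysis.
Set Implicit Arguments. Unset Strict Implicit. Unset Printing Implicit Defensive.
Import Order.TTheory GRing.Theory Num.Theory.
Local Open Scope ring_scope.

Definition sqnorm (R : realType) (m : nat) (v : 'cV[R]_m) : R :=
  \sum_(i < m) (v i ord0) ^+ 2.

Definition Fls (R : realType) (M N : nat) (A : 'M[R]_(M, N)) (b : 'cV[R]_M)
  (x : 'cV[R]_N) : R := sqnorm (A *m x - b) / 2.

Definition Ltil (R : realType) (M N : nat) (A : 'M[R]_(M, N)) : R :=
  \big[Num.max/0]_(i < M) \sum_(j < N) (A i j) ^+ 2.

Definition alpha (R : realType) (a b : R) (k : nat) : R := a / (b + k%:R).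

Definition Cst (R : realType) (M : nat) (Lt Fstar al : R) : R :=
  2 * al ^+ 2 * M%:R * Lt * Fstar.

Definition Aprod (R : realType) (a b sigma : R) (k n : nat) : R :=
  \prod_(k <= i < n.+1) (1 - 2 * alpha a b i * sigma ^+ 2).

Definition Tn (R : realType) (M : nat) (Lt Fstar a b sigma : R) (n : nat) : R :=
  \sum_(1 <= i < n.+1) Aprod a b sigma i n * Cst M Lt Fstar (alpha a b i.-1).

(** The recursion [T_(n+1) = (1 - t/(b+n+1)) (T_n + D/(b+n)^2)] with [T_0 = 0],
    where [D = 2 a^2 M Ltilde F_*], is compared with an explicit majorant.
    For [t > 1] the majorant [K/(b+n)] with [K = 2D/(t-1)] is preserved by one
    step of the recursion.  For [t < 1] one multiplies by [(b+n+1)^t]: the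
    damping factor is absorbed by [(1 - t/z)(z+1)^t <= z^t], and the increment
    [D (b+n+1)^t/(b+n)^2] is dominated by [4D/(1-t)] times the increment of
    [-(b+n)^(t-1)], so the products telescope to the bound [4D b^(t-1)/(1-t)].
    Both arguments need the damping factors to be nonnegative, which follows
    from [sigma^2 <= M Ltilde] (Rayleigh quotient and Cauchy-Schwarz) and the
    step-size condition. *)
From HB Require Import structures.
From mathcomp Require Import all_boot all_order all_algebra.
From mathcomp Require Import all_classical all_reals all_analysis.
From mathcomp Require Import ring lra.
Import Order.TTheory GRing.Theory Num.Theory.
Local Open Scope ring_scope.

Section RealInequalities.
Context {R : realType}.
Implicit Types z h p q : R.

Lemma powR_expR z q : 0 < z -> powR z q = expR (q * ln z).
Proof. by move=> z_gt0; rewrite /powR gt_eqF. Qed.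

Lemma ln_le_tangent z h : 0 < z -> 0 < z + h -> ln (z + h) <= ln z + h / z.
Proof.
move=> z_gt0 zh_gt0.
have -> : z + h = z * (1 + h / z) by rewrite mulrDr mulr1 mulrCA divff ?gt_eqF ?mulr1.
have hz_gt : -1 < h / z by rewrite ltr_pdivlMr // mulN1r -subr_gt0 opprK addrC.
rewrite lnM ?posrE //; last by rewrite -ltrBlDl sub0r.
by rewrite lerD2l le_ln1Dx.
Qed.

Lemma powR_succ_le z q : 0 < z -> 0 <= q ->
  (1 - q / z) * powR (z + 1) q <= powR z q.
Proof.
move=> z_gt0 q_ge0; rewrite !powR_expR //; last by lra.
apply: (@le_trans _ _ (expR (- (q / z)) * expR (q * ln (z + 1)))).
  by rewrite ler_wpM2r ?expR_ge0 ?expR_ge1Dx.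
rewrite -expRD ler_expR.
have : q * ln (z + 1) <= q * (ln z + 1 / z) by rewrite ler_wpM2l ?ln_le_tangent //; lra.
by rewrite mulrDr mul1r; lra.
Qed.

Lemma powR_pred_sub_ge z p : 1 < z -> 0 <= p ->
  p * powR z (- p) / z <= powR (z - 1) (- p) - powR z (- p).
Proof.
move=> z_gt1 p_ge0; have z_gt0 : 0 < z by lra.
rewrite !powR_expR //; last by lra.
set e := expR (- p * ln z).
suff : e * (1 + p / z) <= expR (- p * ln (z - 1)) by rewrite mulrDr mulr1 mulrCA mulrA; lra.
apply: (@le_trans _ _ (e * expR (p / z))); first by rewrite ler_wpM2l ?expR_ge0 ?expR_ge1Dx.
rewrite /e -expRD ler_expR.
have : p * ln (z + -1) <= p * (ln z + -1 / z) by rewrite ler_wpM2l ?ln_le_tangent //; lra.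
by rewrite mulrDr mulN1r mulrN; lra.
Qed.

(** This is where the exponent [t - 1] of the majorant comes from. *)
Lemma powR_increment_le (B t D : R) : 1 <= B -> 0 < t -> t < 1 -> 0 <= D ->
  D * powR (B + 1) t / B ^+ 2 <=
  4 * D / (1 - t) * (powR B (t - 1) - powR (B + 1) (t - 1)).
Proof.
move=> B_ge1 t_gt0 t_lt1 D_ge0.
have B1_gt0 : 0 < B + 1 by lra.
have p_gt0 : 0 < 1 - t by lra.
have e_gt0 : 0 < powR (B + 1) (t - 1) by rewrite powR_gt0.
have diff_ge := @powR_pred_sub_ge (B + 1) (1 - t) ltac:(lra) (ltW p_gt0).
rewrite opprB addrK in diff_ge.
have -> : powR (B + 1) t = (B + 1) * powR (B + 1) (t - 1).
  by rewrite mulr_powRB1 ?ltW.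
apply: (@le_trans _ _ (4 * D / (1 - t) * ((1 - t) * powR (B + 1) (t - 1) / (B + 1)))).
  have -> : 4 * D / (1 - t) * ((1 - t) * powR (B + 1) (t - 1) / (B + 1)) =
            D * powR (B + 1) (t - 1) * (4 / (B + 1)).
    by field; rewrite !gt_eqF.
  have -> : D * ((B + 1) * powR (B + 1) (t - 1)) / B ^+ 2 =
            D * powR (B + 1) (t - 1) * ((B + 1) / B ^+ 2).
    by field; rewrite gt_eqF //; lra.
  apply: ler_wpM2l; first by rewrite mulr_ge0 // ltW.
  have B_gt0 : 0 < B by lra.
  by rewrite ler_pdivrMr ?exprn_gt0 // mulrAC ler_pdivlMr //; nra.
by apply: ler_wpM2l diff_ge; apply: divr_ge0; lra.
Qed.

End RealInequalities.

Lemma mulmx_trmx_row00 (R : pzSemiRingType) k (u : 'rV[R]_k) :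
  (u *m u^T) 0 0 = \sum_j u 0 j ^+ 2.
Proof. by rewrite mxE; apply: eq_bigr => j _; rewrite mxE expr2. Qed.

Section RayleighBound.
Context {R : realType}.

Lemma cauchy_schwarz_sum {n} (x y : 'I_n -> R) :
  (\sum_i x i * y i) ^+ 2 <= (\sum_i x i ^+ 2) * (\sum_i y i ^+ 2).
Proof.
have lagrange : \sum_i \sum_j (x i * y j - x j * y i) ^+ 2 =
  (\sum_i x i ^+ 2) * (\sum_j y j ^+ 2) + (\sum_i y i ^+ 2) * (\sum_j x j ^+ 2)
  - 2 * ((\sum_i x i * y i) * (\sum_j x j * y j)).
  rewrite !mulr_suml mulr_sumr -big_split /= -sumrB; apply: eq_bigr => i _.
  rewrite !mulr_sumr -big_split /= -sumrB; apply: eq_bigr => j _.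
  by rewrite /=; ring.
have : 0 <= \sum_i \sum_j (x i * y j - x j * y i) ^+ 2.
  by apply: sumr_ge0 => i _; apply: sumr_ge0 => j _; exact: sqr_ge0.
by rewrite lagrange mulrC expr2; lra.
Qed.

Lemma eigenvalue_trmx_mulmx_le {M N} (A : 'M[R]_(M, N)) s :
  eigenvalue (A^T *m A) s -> s <= M%:R * Ltil A.
Proof.
case/eigenvalueP => v vA v_neq0; set w := v *m A^T.
have sv_w : s * \sum_j v 0 j ^+ 2 = \sum_i w 0 i ^+ 2.
  have ww : w *m w^T = s *: (v *m v^T).
    by rewrite /w trmx_mul trmxK mulmxA -(mulmxA v) vA scalemxAl.
  move: (congr1 (fun m : 'M[R]_1 => m 0 0) ww) => /=.
  by rewrite mulmx_trmx_row00 mxE mulmx_trmx_row00 => ->.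
have v_gt0 : 0 < \sum_j v 0 j ^+ 2.
  rewrite lt_def sumr_ge0 ?andbT => [|j _]; last exact: sqr_ge0.
  apply: contra v_neq0 => /eqP /psumr_eq0P v0; apply/eqP/rowP => j.
  by apply/eqP; rewrite mxE -sqrf_eq0 v0 // => k _; exact: sqr_ge0.
have w_le i : w 0 i ^+ 2 <= (\sum_j v 0 j ^+ 2) * Ltil A.
  have -> : w 0 i = \sum_j v 0 j * A i j.
    by rewrite mxE; apply: eq_bigr => j _; rewrite mxE.
  apply: (le_trans (cauchy_schwarz_sum _ _)); apply: ler_wpM2l.
    by apply: sumr_ge0 => j _; exact: sqr_ge0.
  exact: (le_bigmax _ (fun i => \sum_(j < N) A i j ^+ 2) i).
rewrite -(ler_pM2r v_gt0) sv_w mulrAC.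
apply: (le_trans (ler_sum _ (fun i _ => w_le i))).
by rewrite sumr_const card_ord -mulrA mulr_natl.
Qed.

End RayleighBound.

Lemma Tn_rec (R : realType) M (Lt F a b s : R) n :
  Tn M Lt F a b s n.+1 =
  (1 - 2 * alpha a b n.+1 * s ^+ 2) * (Tn M Lt F a b s n + Cst M Lt F (alpha a b n)).
Proof.
rewrite /Tn big_nat_recr //= /Aprod big_nat1 mulrDr; congr (_ + _).
rewrite mulr_sumr; apply: eq_big_nat => i /andP[i_ge1 i_le].
by rewrite big_nat_recr /= 1?mulrAC 1?mulrC // ltnW.
Qed.

Section DampedRecursion.
Context {R : realType} {b t D : R} {u : nat -> R}.
Hypotheses (b_gt1 : 1 < b) (t_gt0 : 0 < t) (t_le : t <= b + 1) (D_ge0 : 0 <= D).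
Hypothesis u0 : u 0 = 0.
Hypothesis uS :
  forall n, u n.+1 = (1 - t / (b + n%:R + 1)) * (u n + D / (b + n%:R) ^+ 2).

Let b_add_gt1 n : 1 < b + n%:R.
Proof. by rewrite -[1]addr0 ltr_leD. Qed.

Let b_addS n : b + n.+1%:R = b + n%:R + 1.
Proof. by rewrite -natr1 addrA. Qed.

Lemma damped_factor_ge0 n : 0 <= 1 - t / (b + n%:R + 1).
Proof.
have B1_gt0 : 0 < b + n%:R + 1 by have := b_add_gt1 n; lra.
by rewrite subr_ge0 ler_pdivrMr // mul1r (le_trans t_le) // lerD2r lerDl ler0n.
Qed.

Lemma damped_rec_ge0 n : 0 <= u n.
Proof.
elim: n => [|n IH]; first by rewrite u0.
rewrite uS mulr_ge0 ?damped_factor_ge0 // addr_ge0 // divr_ge0 //.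
exact: sqr_ge0.
Qed.

Lemma damped_rec_le_powR : t < 1 ->
  exists K, forall n, u n <= K * powR (b + n%:R) (- t).
Proof.
move=> t_lt1; set E := 4 * D / (1 - t).
have E_ge0 : 0 <= E by rewrite divr_ge0 ?mulr_ge0 //; lra.
(* Weighted by [(b+n+1)^t], the sequence is dominated by a telescoping sum. *)
have telescope n :
  u n * powR (b + n%:R + 1) t <= E * (powR b (t - 1) - powR (b + n%:R) (t - 1)).
  elim: n => [|n IH]; first by rewrite u0 addr0 subrr mulr0 mul0r.
  rewrite uS b_addS; have := b_add_gt1 n; set B := b + n%:R => B_gt1.
  have damp := @powR_succ_le R (B + 1) t ltac:(lra) (ltW t_gt0).
  have incr := @powR_increment_le R B t D (ltW B_gt1) t_gt0 t_lt1 D_ge0.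
  have v_ge0 : 0 <= u n + D / B ^+ 2.
    by rewrite addr_ge0 ?damped_rec_ge0 // divr_ge0 // sqr_ge0.
  apply: (@le_trans _ _ (powR (B + 1) t * (u n + D / B ^+ 2))).
    by rewrite mulrAC ler_wpM2r.
  by rewrite mulrDr mulrCA mulrA; rewrite -/E in incr; lra.
exists (E * powR b (t - 1)) => n.
have Bn_gt1 := b_add_gt1 n.
have pow_le : powR (b + n%:R) t <= powR (b + n%:R + 1) t.
  by apply: ge0_ler_powR; rewrite ?nnegrE ?ltW //; lra.
have : u n * powR (b + n%:R) t <= E * powR b (t - 1).
  apply: (le_trans (ler_wpM2l (damped_rec_ge0 n) pow_le)).
  apply: (le_trans (telescope n)); rewrite ler_wpM2l // gerBl.
  exact: powR_ge0.
by rewrite powRN -ler_pdivlMr ?powR_gt0 //; lra.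
Qed.

Lemma damped_rec_le_inv : 1 < t -> exists K, forall n, u n <= K / (b + n%:R).
Proof.
move=> t_gt1; set K := 2 * D / (t - 1).
have K_ge0 : 0 <= K by rewrite divr_ge0 ?mulr_ge0 //; lra.
exists K; elim=> [|n IH].
  by rewrite u0 divr_ge0 //; have := b_add_gt1 0; lra.
rewrite uS b_addS; have := b_add_gt1 n; set B := b + n%:R => B_gt1.
apply: (@le_trans _ _ ((1 - t / (B + 1)) * (K / B + D / B ^+ 2))).
  by rewrite ler_wpM2l ?damped_factor_ge0 // lerD2r.
rewrite -subr_ge0.
have -> : K / (B + 1) - (1 - t / (B + 1)) * (K / B + D / B ^+ 2) =
          D * (B - 1 + t) / (B ^+ 2 * (B + 1)).
  by rewrite /K; field; rewrite ?mulf_neq0 ?expf_neq0 ?gt_eqF //; lra.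
by rewrite divr_ge0 ?mulr_ge0 ?sqr_ge0 //; lra.
Qed.

End DampedRecursion.

Theorem lemma17 (R : realType) (M N : nat) (A : 'M[R]_(M, N)) (bv : 'cV[R]_M)
  (Fstar sigma a b : R) :
  (N <= M)%N ->
  \rank A = N ->
  (forall x, Fstar <= Fls A bv x) ->
  (exists x, Fls A bv x = Fstar) ->
  0 < sigma ->
  eigenvalue (A^T *m A) (sigma ^+ 2) ->
  0 < a -> 1 < b ->
  a / b <= (2 * M%:R * Ltil A)^-1 ->
  let t := 2 * a * sigma ^+ 2 in
  (t < 1 -> exists K : R, forall n : nat, (1 <= n)%N ->
     Tn M (Ltil A) Fstar a b sigma n <= K * powR (b + n%:R) (- t)) /\
  (1 < t -> exists K : R, forall n : nat, (1 <= n)%N ->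
     Tn M (Ltil A) Fstar a b sigma n <= K * (b + n%:R)^-1).
Proof.
move=> _ _ _ [x Fx] sigma_gt0 eig a_gt0 b_gt1 step t.
have sigma_le := eigenvalue_trmx_mulmx_le A _ eig.
set L := M%:R * Ltil A in sigma_le.
have L_gt0 : 0 < L by apply: lt_le_trans sigma_le; rewrite exprn_gt0.
have t_gt0 : 0 < t by rewrite !mulr_gt0 ?exprn_gt0.
have t_le : t <= b + 1.
  have aL_le : 2 * L * a <= b.
    move: step; rewrite -mulrA -/L ler_pdivrMr ?(lt_trans ltr01) //.
    by rewrite ler_pdivlMl // mulr_gt0.
  have : t <= 2 * a * L by rewrite ler_wpM2l // mulr_ge0 // ltW.
  lra.
have F_ge0 : 0 <= Fstar.
  by rewrite -Fx divr_ge0 // sumr_ge0 // => i _; exact: sqr_ge0.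
set D := 2 * a ^+ 2 * L * Fstar.
have D_ge0 : 0 <= D.
  by apply: mulr_ge0 F_ge0; rewrite mulr_ge0 ?(ltW L_gt0) // mulr_ge0 ?sqr_ge0.
have T0 : Tn M (Ltil A) Fstar a b sigma 0 = 0 by rewrite /Tn big_geq.
have TS n : Tn M (Ltil A) Fstar a b sigma n.+1 =
    (1 - t / (b + n%:R + 1)) * (Tn M (Ltil A) Fstar a b sigma n + D / (b + n%:R) ^+ 2).
  have B_gt0 : 0 < b + n%:R by have := ler0n R n; lra.
  rewrite Tn_rec /alpha /Cst /D /L /t -[n.+1%:R]natr1 addrA.
  by congr (_ * (_ + _)); field; rewrite gt_eqF //; lra.
split=> [t_lt1 | t_gt1].
- have [K T_le] := damped_rec_le_powR b_gt1 t_gt0 t_le D_ge0 T0 TS t_lt1.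
  by exists K => n _.
- have [K T_le] := damped_rec_le_inv b_gt1 t_le D_ge0 T0 TS t_gt1.
  by exists K => n _.
Qed.
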